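(* Let $0<k<n$ and let $\omega=(c_1,\dots,c_n)\in\{0,1\}^n$ with exactly $k$ ones, viewed as a weight in the Weyl orbit $W\omega_k$. Let $l_1<l_2<\dots<l_q$ be the indices $j\in\{1,\dots,n-1\}$ with $c_j-c_{j+1}=-1$ and $r_1<r_2<\dots<r_p$ the indices $j\in\{1,\dots,n-1\}$ with $c_j-c_{j+1}=1$ (so $\omega=\sum_i\omega_{r_i}-\sum_i\omega_{l_i}$, and the two sequences interlace). Assume $r_1<l_1<r_2<l_2<\cdots$ (so $q\in\{p-1,p\}$). Define integers recursively by $f(r_1)=r_1$, $f(l_i)=l_i-f(r_i)$, $f(r_{i+1})=r_{i+1}-f(l_i)$. Then: (1) $0<f(r_i)\le r_i$ and $0<f(l_i)<l_i$ for all $i$; in particular all these labels lie in $\{1,\dots,n-1\}$. (2) Let $D$ be the directed labelled graph with vertices $A,R_1,\dots,R_p,L_1,\dots,L_q$ and edges $A\to R_1$ labelled $r_1$, $R_i\to R_{i+1}$ labelled $r_{i+1}$, $A\to L_1$ labelled $l_1$, $L_i\to L_{i+1}$ labelled $l_{i+1}$, $R_i\to L_i$ labelled $f(l_i)$ ($1\le i\le q$), and $L_i\to R_{i+1}$ labelled $f(r_{i+1})$ ($1\le i\le p-1$). Then the paths $A,R_1,\dots,R_p$ and $A,L_1,\dots,L_q$ are geodesics (of lengths $\sum_i\omega_{r_i}$ and $\sum_i\omega_{l_i}$ respectively), and $D$ has coherent geodesics at $A$ (every pair $(A,v)$ has coherent geodesics). The same conclusions hold in the case $l_1<r_1<l_2<r_2<\cdots$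 for the graph obtained by the same rules with the roles of $(l_i,L_i)$ and $(r_i,R_i)$ interchanged.
   Context: Weights of $\mathrm{SL}_n$ are identified with $\mathbb{Z}^n/\mathbb{Z}(1,\dots,1)$; $\omega_i=e_1+\dots+e_i$, with $\omega_0=0$ and indices mod $n$; the Weyl group $W=S_n$ permutes coordinates; weights are partially ordered by $\mu\le\nu$ iff $\nu-\mu$ is a nonnegative integer combination of positive roots. In a directed graph with edges labelled by $\{0,\dots,n-1\}$, a path may traverse edges in either direction; its length is the sum over its edges of $\omega_a$ (edge labelled $a$ traversed along its direction) or $\omega_{n-a}$ (traversed against it). A geodesic between two vertices is a path between them of minimal length (no path between them has strictly smaller length); a pair $(a,b)$ has coherent geodesics if all geodesics between $a$ and $b$ have the same length. (The graph $D$ is the dual graph of the length-one ''triangular diagram'' web $T_\omega$ with vertex $A$.) *)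

From HB Require Import structures.
From mathcomp Require Import all_boot all_order all_algebra.
Set Implicit Arguments. Unset Strict Implicit. Unset Printing Implicit Defensive.
Import Order.TTheory GRing.Theory Num.Theory.
Local Open Scope ring_scope.

(* A weight is represented by a vector of Z^n, i.e. a function 'I_n -> int;
   coordinate i (0-based) is the coefficient of e_(i+1).  Weights are taken
   modulo Z(1,...,1): see [wcong]. *)
Definition wt (n : nat) := {ffun 'I_n -> int}.

Definition wcong n (x y : wt n) : Prop := exists z : int, x = y + [ffun=> z].

(* omega_a = e_1 + ... + e_a, index a taken mod n (omega_0 = 0) *)
Definition omega n (a : int) : wt n :=
  [ffun i : 'I_n => (((i%:Z < (a %% n%:Z)%Z)%R : bool) : nat)%:Z].

Definition proot n (i j : 'I_n) : wt n :=
  [ffun k => (((k == i) : bool) : nat)%:Z - (((k == j) : bool) : nat)%:Z].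

Definition wle n (mu nu : wt n) : Prop :=
  exists a : 'I_n -> 'I_n -> nat,
    wcong (nu - mu) (\sum_(i < n) \sum_(j < n | (i < j)%N) proot i j *+ a i j).

Definition wlt n (mu nu : wt n) : Prop := wle mu nu /\ ~ wcong mu nu.

Inductive vtx := VA | VR of nat | VL of nat.

Definition vtx_code (v : vtx) : option (bool * nat) :=
  match v with VA => None | VR i => Some (true, i) | VL i => Some (false, i) end.
Definition vtx_decode (o : option (bool * nat)) : vtx :=
  match o with None => VA | Some (true, i) => VR i | Some (false, i) => VL i end.
Lemma vtx_codeK : cancel vtx_code vtx_decode. Proof. by case. Qed.
HB.instance Definition _ := Equality.copy vtx (can_type vtx_codeK).

(* an edge (src, dst, label) *)
Definition edge := (vtx * vtx * int)%type.
(* a step of a path: an edge, and whether it is traversed along (true)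
   or against (false) its direction *)
Definition step := (edge * bool)%type.

Fixpoint walk (E : seq edge) (u : vtx) (s : seq step) (v : vtx) : bool :=
  match s with
  | [::] => u == v
  | (e, d) :: s' =>
      (e \in E) &&
      (if d then (e.1.1 == u) && walk E e.1.2 s' v
            else (e.1.2 == u) && walk E e.1.1 s' v)
  end.

Definition plen n (s : seq step) : wt n :=
  \sum_(st <- s) (if st.2 then omega n st.1.2 else omega n (n%:Z - st.1.2)).

Definition geodesic n (E : seq edge) (u v : vtx) (s : seq step) : Prop :=
  walk E u s v /\ ~ (exists s', walk E u s' v /\ wlt (plen n s') (plen n s)).

Definition coherent n (E : seq edge) (u v : vtx) : Prop :=
  forall s1 s2, geodesic n E u v s1 -> geodesic n E u v s2 ->
    wcong (plen n s1) (plen n s2).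

(* c_j for j = 1..n (1-based) *)
Definition cj (c : seq bool) (j : nat) : int := ((nth false c j.-1 : bool) : nat)%:Z.

Definition rs (n : nat) (c : seq bool) : seq nat :=
  [seq j <- iota 1 n.-1 | cj c j - cj c j.+1 == 1].
Definition ls (n : nat) (c : seq bool) : seq nat :=
  [seq j <- iota 1 n.-1 | cj c j - cj c j.+1 == -1].

(* 1-based access x_i *)
Definition at1 (xs : seq nat) (i : nat) : nat := nth 0%N xs i.-1.

Fixpoint alt (xs ys : seq nat) : seq nat :=
  match xs, ys with
  | x :: xs', y :: ys' => x :: y :: alt xs' ys'
  | _, _ => xs ++ ys
  end.

Definition interlaced (xs ys : seq nat) : bool :=
  sorted ltn (alt xs ys) && (size ys <= size xs <= (size ys).+1)%N.

(* the recursion f(t_1) = t_1, f(t_(j+1)) = t_(j+1) - f(t_j) along t_1,t_2,... *)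
Fixpoint fchain (prev : int) (s : seq nat) : seq int :=
  match s with
  | [::] => [::]
  | t :: s' => let v := t%:Z - prev in v :: fchain v s'
  end.

Definition fD (xs ys : seq nat) (t : nat) : int :=
  nth 0 (fchain 0 (alt xs ys)) (index t (alt xs ys)).

Definition Dgraph (xs ys : seq nat) (X Y : nat -> vtx) : seq edge :=
  let p := size xs in let q := size ys in let f := fD xs ys in
  [seq (if i == 1%N then VA else X i.-1, X i, (at1 xs i)%:Z) | i <- iota 1 p] ++
  [seq (if i == 1%N then VA else Y i.-1, Y i, (at1 ys i)%:Z) | i <- iota 1 q] ++
  [seq (X i, Y i, f (at1 ys i)) | i <- iota 1 q] ++
  [seq (Y i, X i.+1, f (at1 xs i.+1)) | i <- iota 1 p.-1].

Definition chainpath (xs : seq nat) (X : nat -> vtx) : seq step :=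
  [seq ((if i == 1%N then VA else X i.-1, X i, (at1 xs i)%:Z), true)
  | i <- iota 1 (size xs)].

Definition chainend (xs : seq nat) (X : nat -> vtx) : vtx :=
  last VA [seq X i | i <- iota 1 (size xs)].

Definition conclusions (n : nat) (xs ys : seq nat) (X Y : nat -> vtx) : Prop :=
  let f := fD xs ys in
  let D := Dgraph xs ys X Y in
  (forall i, (1 <= i <= size xs)%N -> 0 < f (at1 xs i) <= (at1 xs i)%:Z) /\
  (forall i, (1 <= i <= size ys)%N -> 0 < f (at1 ys i) < (at1 ys i)%:Z) /\
  (forall e, e \in D -> 1 <= e.2 <= n%:Z - 1) /\
  geodesic n D VA (chainend xs X) (chainpath xs X) /\
  wcong (plen n (chainpath xs X)) (\sum_(x <- xs) omega n x%:Z) /\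
  geodesic n D VA (chainend ys Y) (chainpath ys Y) /\
  wcong (plen n (chainpath ys Y)) (\sum_(y <- ys) omega n y%:Z) /\
  (forall v, v \in VA :: [seq X i | i <- iota 1 (size xs)]
                      ++ [seq Y i | i <- iota 1 (size ys)] ->
     coherent n D VA v).

From HB Require Import structures.
From mathcomp Require Import all_boot all_order all_algebra.
From mathcomp Require Import zify.
From Stdlib Require Import Classical.
Set Implicit Arguments. Unset Strict Implicit. Unset Printing Implicit Defensive.
Import Order.TTheory GRing.Theory Num.Theory.
Local Open Scope ring_scope.

(* Weights are compared through their partial sums psum m v = v_0 + ... +
   v_(m-1).  A weight lies in the cone spanned by the positive roots (up to
   Z(1,...,1)) as soon as, after adding a constant vector, all its partial sums
   are nonnegative and the total sum vanishes, since it is then the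
   combination sum_i psum_(i+1) (e_i - e_(i+1)) of simple roots; conversely
   root combinations have such partial sums, whence the dominance order is
   antisymmetric up to Z(1,...,1).

   A potential d on a graph with d A = 0, such that crossing any edge in
   either direction raises d by at most the length of the crossing, bounds the
   length of every path from A to v from below by d v; a path of length d v is
   then a geodesic and all geodesics from A to v have that length.

   For the chain x_0 < y_0 < x_1 < ... the potential is
   d(X_j) = omega_(x_0) + ... + omega_(x_(j-1)), and likewise for Y.  The
   recursion for f has the closed form f(x_j) = x_j - F_j, f(y_j) = F_(j+1),
   with F_j = sum_(i<j) (y_i - x_i).  Every edge condition reduces, through
   psum (omega_a) = min(m, a), to inequalities between F_j and the sums
   sum_(i<j) min(m, x_i), sum_(i<j) min(m, y_i), which are proved together by
   induction on j.  The chain paths A, X_1, ..., X_p realise d, which gives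
   (2), and the bounds on F give (1).  The theorem is this statement applied
   to (r, l) and to (l, r). *)

(* The k-th coordinate of v, 0 outside [0, n). *)
Definition coord n (v : wt n) (k : nat) : int :=
  if insub k is Some i then v i else 0.

Definition psum n (m : nat) (v : wt n) : int := \sum_(0 <= k < m) coord v k.

Lemma coord_ord n (v : wt n) (i : 'I_n) : coord v i = v i.
Proof. by rewrite /coord valK. Qed.

Lemma coord_ffun n (g : nat -> int) k :
  coord [ffun i : 'I_n => g i] k = if (k < n)%N then g k else 0.
Proof. by rewrite /coord; case: insubP => [i -> <-|/negbTE ->]; rewrite ?ffunE. Qed.

Fact psum_is_zmod_morphism n m : zmod_morphism (@psum n m).
Proof.
move=> v w; rewrite /psum -sumrB; apply: eq_bigr => k _.
by rewrite /coord; case: insubP => [i _ _|_]; rewrite ?ffunE ?subr0.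
Qed.

HB.instance Definition _ n m :=
  GRing.isZmodMorphism.Build (wt n) int (@psum n m) (@psum_is_zmod_morphism n m).

Lemma psumD n m (v w : wt n) : psum m (v + w) = psum m v + psum m w.
Proof. exact: raddfD. Qed.

Lemma psumN n m (v : wt n) : psum m (- v) = - psum m v.
Proof. exact: raddfN. Qed.

Lemma psumB n m (v w : wt n) : psum m (v - w) = psum m v - psum m w.
Proof. exact: raddfB. Qed.

Lemma psumS n m (v : wt n) : psum m.+1 v = psum m v + coord v m.
Proof. by rewrite /psum big_nat_recr. Qed.

Lemma psum_ffun n (g : nat -> int) m :
  psum m [ffun i : 'I_n => g i] = \sum_(0 <= k < minn m n) g k.
Proof.
elim: m => [|m IH]; first by rewrite min0n /psum !big_geq.
rewrite psumS IH coord_ffun; case: ltnP => h.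
  by rewrite (minn_idPl h) big_nat_recr.
by rewrite addr0 (minn_idPr (leqW h)).
Qed.

Lemma psum_const n m (z : int) : psum m [ffun _ : 'I_n => z] = z *+ minn m n.
Proof. by rewrite (psum_ffun n (fun _ => z)) sumr_const_nat subn0. Qed.

Lemma sum_indicator (i N : nat) :
  \sum_(0 <= k < N) ((k == i) : nat)%:Z = ((i < N)%N : nat)%:Z.
Proof.
rewrite (eq_bigr (fun k => if k == i then 1 else 0)); last by move=> k _; case: eqP.
by rewrite -big_mkcond big_nat1_eq; case: ltnP.
Qed.

Lemma psum_proot n m (i j : 'I_n) :
  psum m (proot i j) = ((i < m)%N : nat)%:Z - ((j < m)%N : nat)%:Z.
Proof.
have -> : proot i j = [ffun k : 'I_n => ((val k == i) : nat)%:Z - ((val k == j) : nat)%:Z].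
  by apply/ffunP => k; rewrite !ffunE.
rewrite (psum_ffun n (fun k => ((k == i) : nat)%:Z - ((k == j) : nat)%:Z)).
by rewrite sumrB !sum_indicator !leq_min !ltn_ord !andbT.
Qed.

Lemma sum_below (a N : nat) : \sum_(0 <= k < N) ((k < a)%N : nat)%:Z = (minn N a)%:Z.
Proof.
elim: N => [|N IH]; first by rewrite big_geq // min0n.
by rewrite big_nat_recr //= IH -PoszD; congr Posz; case: (ltnP N a) => /= h; lia.
Qed.

Lemma psum_omega n m (a : nat) : (a < n)%N -> psum m (omega n a%:Z) = (minn m a)%:Z.
Proof.
move=> lt_an.
have -> : omega n a%:Z = [ffun i : 'I_n => ((val i < a)%N : nat)%:Z].
  by apply/ffunP => i; rewrite !ffunE modz_nat modn_small // ltz_nat.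
by rewrite (psum_ffun n (fun k => ((k < a)%N : nat)%:Z)) sum_below; congr Posz; lia.
Qed.

Definition rootcomb n (a : 'I_n -> 'I_n -> nat) : wt n :=
  \sum_(i < n) \sum_(j < n | (i < j)%N) proot i j *+ a i j.

Definition incone n (v : wt n) : Prop := exists a, wcong v (rootcomb a).

Lemma incone_wle n (mu nu : wt n) : wle mu nu = incone (nu - mu).
Proof. by []. Qed.

Lemma rootcombD n (a b : 'I_n -> 'I_n -> nat) :
  rootcomb (fun i j => a i j + b i j)%N = rootcomb a + rootcomb b.
Proof.
rewrite /rootcomb -big_split; apply: eq_bigr => i _.
by rewrite -big_split; apply: eq_bigr => j _; exact: mulrnDr.
Qed.

Lemma rootcomb0 n : rootcomb (fun _ _ : 'I_n => 0%N) = 0.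
Proof. by rewrite /rootcomb big1 // => i _; rewrite big1 // => j _; rewrite mulr0n. Qed.

Lemma incone0 n : incone (0 : wt n).
Proof. by exists (fun _ _ => 0%N), 0; rewrite rootcomb0; apply/ffunP => k; rewrite !ffunE. Qed.

Lemma inconeD n (v w : wt n) : incone v -> incone w -> incone (v + w).
Proof.
move=> [a [z1 ->]] [b [z2 ->]]; exists (fun i j => a i j + b i j)%N, (z1 + z2).
by rewrite rootcombD; apply/ffunP => k; rewrite !ffunE; lia.
Qed.

Lemma psum_rootcomb n m (a : 'I_n -> 'I_n -> nat) : psum m (rootcomb a) =
  \sum_(i < n) \sum_(j < n | (i < j)%N) (((i < m)%N : nat)%:Z - ((j < m)%N : nat)%:Z) *+ a i j.
Proof.
rewrite raddf_sum; apply: eq_bigr => i _; rewrite raddf_sum; apply: eq_bigr => j _.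
by rewrite raddfMn /= psum_proot.
Qed.

Lemma psum_rootcomb_ge0 n m (a : 'I_n -> 'I_n -> nat) : 0 <= psum m (rootcomb a).
Proof.
rewrite psum_rootcomb; apply: sumr_ge0 => i _; apply: sumr_ge0 => j lt_ij.
by apply: mulrn_wge0; case: (ltnP j m) => [/(ltn_trans lt_ij) ->|]; case: (i < m)%N.
Qed.

Lemma psum_rootcomb_total n (a : 'I_n -> 'I_n -> nat) : psum n (rootcomb a) = 0.
Proof.
by rewrite psum_rootcomb big1 // => i _; rewrite big1 // => j _; rewrite !ltn_ord subrr mul0rn.
Qed.

Lemma rootcomb_simple n (b : nat -> nat) (k : 'I_n) :
  rootcomb (fun i j => if val j == (val i).+1 then b i else 0%N) k =
  (if (k.+1 < n)%N then (b k)%:Z else 0) - (if (0 < k)%N then (b k.-1)%:Z else 0).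
Proof.
pose G i := (((k == i :> nat) : nat)%:Z - ((k == i.+1 :> nat) : nat)%:Z) *+ b i.
have inner (i : 'I_n) : (\sum_(j < n | (i < j)%N)
    proot i j *+ (if val j == (val i).+1 then b i else 0%N)) k = if (i.+1 < n)%N then G i else 0.
  rewrite sum_ffunE (eq_bigr (fun j : 'I_n => if val j == (val i).+1 then G i else 0)).
    by rewrite -big_mkcondr (big_ord1_cond_eq _ (fun _ => G i) (fun j => (i < j)%N)) ltnSn andbT.
  move=> j _; rewrite ffunMnE !ffunE; case: (val j =P (val i).+1) => [eji|_]; last by rewrite mulr0n.
  by rewrite /G -[k == j]val_eqE -[k == i]val_eqE /= eji.
rewrite sum_ffunE (eq_bigr _ (fun i _ => inner i)).
rewrite -(big_mkord xpredT (fun i => if (i.+1 < n)%N then G i else 0)).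
rewrite (eq_bigr (fun i => (if ((i.+1 < n) && (i == k))%N then (b i)%:Z else 0) -
                        (if (((i.+1 < n) && (0 < k)) && (i == k.-1))%N then (b i)%:Z else 0))); last first.
  move=> i _; rewrite /G; case: (i.+1 < n)%N; last by rewrite subrr.
  rewrite mulrnBl andTb; congr (_ - _).
    by rewrite eq_sym; case: eqP => _; rewrite ?mul1rn ?natz ?mul0rn.
  clear G inner; case: k => [[|k'] lt_k] /=; first by rewrite mul0rn.
  by rewrite eqSS eq_sym; case: eqP => _; rewrite ?mul1rn ?natz ?mul0rn.
rewrite sumrB -!big_mkcond !big_nat1_cond_eq /= ltn_ord.
clear G inner; case: k => [[|k'] lt_k] /=; first by rewrite ltnn !andbF subr0.
by rewrite lt_k (ltnW lt_k).
Qed.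

Lemma simple_root_decomposition n (v : wt n) :
  (forall m, 0 <= psum m v) -> psum n v = 0 ->
  v = rootcomb (fun i j => if val j == (val i).+1 then `|psum (val i).+1 v|%N else 0%N).
Proof.
move=> ge0 total; apply/ffunP => k.
rewrite (rootcomb_simple (fun i => `|psum i.+1 v|%N)) !gez0_abs //.
have -> : v k = psum k.+1 v - psum k v by rewrite psumS coord_ord addrC addKr.
congr (_ - _); first case: ltnP => // ge_k.
  by have -> : k.+1 = n by apply/eqP; rewrite eqn_leq ge_k ltn_ord.
by case: posnP => [->|pos_k]; [rewrite /psum big_geq | rewrite prednK].
Qed.

Lemma incone_of_psum n (v : wt n) (z : int) :
  (forall m, 0 <= psum m v + z *+ minn m n) -> psum n v + z *+ n = 0 -> incone v.
Proof.
move=> ge0 total; set w := v + [ffun _ => z].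
have psum_w m : psum m w = psum m v + z *+ minn m n by rewrite psumD psum_const.
have /ffunP decomp := @simple_root_decomposition n w
  (fun m => ltac:(rewrite psum_w; exact: ge0)) ltac:(rewrite psum_w minnn; exact: total).
exists (fun i j => if val j == (val i).+1 then `|psum (val i).+1 w|%N else 0%N), (- z).
by apply/ffunP => k; rewrite !ffunE -decomp !ffunE addrK.
Qed.

Lemma wcong_refl n (x : wt n) : wcong x x.
Proof. by exists 0; apply/ffunP => k; rewrite !ffunE addr0. Qed.

Lemma wcong_sym n (x y : wt n) : wcong x y -> wcong y x.
Proof. by move=> [z ->]; exists (- z); apply/ffunP => k; rewrite !ffunE addrK. Qed.

Lemma wcong_trans n (x y w : wt n) : wcong x y -> wcong y w -> wcong x w.
Proof.
by move=> [z1 ->] [z2 ->]; exists (z2 + z1); apply/ffunP => k; rewrite !ffunE addrA.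
Qed.

(* If v and -v both lie in the cone, v is constant: the partial sums of the two
   root combinations are nonnegative and add up to -(z1 + z2) min(m, n), where
   z1 + z2 = 0 by looking at m = n; hence they all vanish. *)
Lemma incone_antisym n (v : wt n) : (0 < n)%N -> incone v -> incone (- v) ->
  wcong v 0.
Proof.
move=> n_gt0 [a [z1 Ea]] [b [z2 Eb]].
have psum_a m : psum m (rootcomb a) = psum m v - z1 *+ minn m n.
  by rewrite Ea psumD psum_const addrK.
have psum_b m : psum m (rootcomb b) = - psum m v - z2 *+ minn m n.
  by rewrite -psumN Eb psumD psum_const addrK.
have z12 : z1 + z2 = 0.
  have := psum_rootcomb_total a; have := psum_rootcomb_total b.
  rewrite psum_a psum_b minnn => eb ea.
  have /eqP : (z1 + z2) *+ n = 0 by rewrite mulrnDl; lia.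
  by rewrite mulrn_eq0 eqn0Ngt n_gt0 => /eqP.
have psum_a0 m : psum m (rootcomb a) = 0.
  have := psum_rootcomb_ge0 m a; have := psum_rootcomb_ge0 m b.
  rewrite psum_a psum_b; move: (psum m v) (minn m n) => p N.
  have -> : z2 = - z1 by lia.
  rewrite mulNrn; lia.
exists z1; apply/ffunP => k; move/ffunP: Ea => /(_ k); rewrite !ffunE => ->.
by have := psumS k (rootcomb a); rewrite !psum_a0 coord_ord add0r => <-.
Qed.

Lemma wle_antisym n (mu nu : wt n) : (0 < n)%N -> wle mu nu -> wle nu mu -> wcong mu nu.
Proof.
move=> n_gt0 le_mn le_nm; have le_nm' : incone (- (nu - mu)) by rewrite opprB.
have [z /ffunP E] := incone_antisym n_gt0 le_mn le_nm'.
exists (- z); apply/ffunP => k; have := E k; rewrite !ffunE add0r => <-.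
by rewrite opprB addrC subrK.
Qed.

Definition potential n (E : seq edge) (d : vtx -> wt n) : Prop :=
  forall e, e \in E ->
    incone (d e.1.1 + omega n e.2 - d e.1.2) /\
    incone (d e.1.2 + omega n (n%:Z - e.2) - d e.1.1).

Lemma potential_walk n E (d : vtx -> wt n) : potential E d ->
  forall s u v, walk E u s v -> incone (d u + plen n s - d v).
Proof.
move=> pot; elim=> [|[e dir] s IH] u v /=.
  by move/eqP => ->; rewrite /plen big_nil addr0 subrr; exact: incone0.
case/andP=> e_in walk_s; have [fwd bwd] := pot e e_in.
have telescope (a b c p w : wt n) : a + b - c + (c + p - w) = a + (b + p) - w.
  by rewrite !addrA subrK.
rewrite /plen big_cons /= -/(plen n s).
case: dir walk_s => /andP [/eqP <- /IH walk_s].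
  by rewrite -(telescope _ _ (d e.1.2)); exact: inconeD.
by rewrite -(telescope _ _ (d e.1.1)); exact: inconeD.
Qed.

Lemma tight_geodesic n E (d : vtx -> wt n) v s : (0 < n)%N -> potential E d ->
  d VA = 0 -> walk E VA s v -> plen n s = d v -> geodesic n E VA v s.
Proof.
move=> n_gt0 pot dA walk_s len_s; split=> // -[s' [walk_s' [le_s' not_cong]]].
apply/not_cong/wle_antisym => //; rewrite incone_wle len_s.
by have := potential_walk pot walk_s'; rewrite dA add0r.
Qed.

Lemma tight_coherent n E (d : vtx -> wt n) v s : (0 < n)%N -> potential E d ->
  d VA = 0 -> walk E VA s v -> plen n s = d v -> coherent n E VA v.
Proof.
move=> n_gt0 pot dA walk_s len_s.
have cong_s s' : geodesic n E VA v s' -> wcong (plen n s) (plen n s').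
  move=> [walk_s' not_shorter]; apply: NNPP => not_cong; apply: not_shorter.
  exists s; split=> //; split=> //; rewrite incone_wle len_s.
  by have := potential_walk pot walk_s'; rewrite dA add0r.
by move=> s1 s2 /cong_s/wcong_sym c1 /cong_s c2; exact: wcong_trans c1 c2.
Qed.

Lemma edge_potential n (u w : wt n) (a : nat) : (0 < a < n)%N ->
  psum n w = psum n u + a%:Z ->
  (forall m, psum m w <= psum m u + (minn m a)%:Z) ->
  (forall m, psum m u + (minn m n)%:Z <= psum m w + (minn m (n - a))%:Z) ->
  incone (u + omega n a%:Z - w) /\ incone (w + omega n (n%:Z - a%:Z) - u).
Proof.
move=> a_range total fwd bwd; have a_le : (a <= n)%N by lia.
have psum_a m : psum m (omega n a%:Z) = (minn m a)%:Z by rewrite psum_omega //; lia.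
have psum_na m : psum m (omega n (n - a)%:Z) = (minn m (n - a))%:Z.
  by rewrite psum_omega //; lia.
have neg1 k : (-1 : int) *+ k = - k%:Z by rewrite mulNrn natz.
rewrite subzn //; split.
  have ge0 m : 0 <= psum m u + (minn m a)%:Z - psum m w by have := fwd m; lia.
  have tot : psum n u + (minn n a)%:Z - psum n w = 0 by rewrite total; lia.
  apply: (@incone_of_psum _ _ 0) => [m|]; rewrite mul0rn addr0 psumB psumD psum_a.
    exact: ge0.
  exact: tot.
have ge0 m : 0 <= psum m w + (minn m (n - a))%:Z - psum m u - (minn m n)%:Z.
  by have := bwd m; lia.
have tot : psum n w + (minn n (n - a))%:Z - psum n u - n%:Z = 0.
  by rewrite total; lia.
apply: (@incone_of_psum _ _ (-1)) => [m|]; rewrite neg1 psumB psumD psum_na.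
  exact: ge0.
exact: tot.
Qed.

(* omega_(s_0) + ... + omega_(s_(j-1)): the potential of the j-th vertex of a chain *)
Definition wsum n (s : seq nat) (j : nat) : wt n :=
  \sum_(0 <= i < j) omega n (nth 0%N s i)%:Z.

Definition minsum (s : seq nat) (j m : nat) : nat :=
  (\sum_(0 <= i < j) minn m (nth 0%N s i))%N.

Lemma wsumS n s j : wsum n s j.+1 = wsum n s j + omega n (nth 0%N s j)%:Z.
Proof. by rewrite /wsum big_nat_recr. Qed.

Lemma minsumS s j m : minsum s j.+1 m = (minsum s j m + minn m (nth 0%N s j))%N.
Proof. by rewrite /minsum big_nat_recr. Qed.

Lemma psum_wsum n s j m : (forall i, (i < j)%N -> (nth 0%N s i < n)%N) ->
  psum m (wsum n s j) = (minsum s j m)%:Z.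
Proof.
elim: j => [|j IH] s_lt; first by rewrite /wsum /minsum !big_geq // raddf0.
rewrite wsumS minsumS psumD IH => [|i lt_ij]; last by apply: s_lt; lia.
by rewrite psum_omega ?PoszD // s_lt.
Qed.

Lemma chain_edge n s j : (0 < nth 0%N s j < n)%N ->
  (forall i, (i <= j)%N -> (nth 0%N s i < n)%N) ->
  incone (wsum n s j + omega n (nth 0%N s j)%:Z - wsum n s j.+1) /\
  incone (wsum n s j.+1 + omega n (n%:Z - (nth 0%N s j)%:Z) - wsum n s j).
Proof.
move=> s_j s_lt; have psum_j m : psum m (wsum n s j) = (minsum s j m)%:Z.
  by apply: psum_wsum => i lt_ij; apply: s_lt; lia.
have psum_j1 m : psum m (wsum n s j.+1) = (minsum s j.+1 m)%:Z.
  by apply: psum_wsum => i lt_ij; apply: s_lt; lia.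
apply: edge_potential => // [|m|m]; rewrite psum_j psum_j1 minsumS; lia.
Qed.

Lemma alt_nth (xs ys : seq nat) : (size ys <= size xs <= (size ys).+1)%N ->
  [/\ size (alt xs ys) = (size xs + size ys)%N,
      forall j, (j < size xs)%N -> nth 0%N (alt xs ys) j.*2 = nth 0%N xs j &
      forall j, (j < size ys)%N -> nth 0%N (alt xs ys) j.*2.+1 = nth 0%N ys j].
Proof.
elim: xs ys => [|x0 xs IH] [|y0 ys] //=.
  by case: xs {IH} => [|x1 xs] //= _; split=> // -[].
rewrite !ltnS => sizes; have [size_alt alt_x alt_y] := IH ys sizes.
split=> [|[|j] lt_j|[|j] lt_j] //=; first by rewrite size_alt addnS addSn.
  exact: alt_x.
exact: alt_y.
Qed.

Lemma fchain_nth0 p (s : seq nat) : (0 < size s)%N ->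
  nth 0 (fchain p s) 0 = (nth 0%N s 0)%:Z - p.
Proof. by case: s. Qed.

Lemma fchain_nthS p (s : seq nat) k : (k.+1 < size s)%N ->
  nth 0 (fchain p s) k.+1 = (nth 0%N s k.+1)%:Z - nth 0 (fchain p s) k.
Proof.
elim: s p k => [|t s IH] p [|k] //=; first by case: s {IH}.
by move=> lt_k; rewrite IH.
Qed.

Definition chainstep (s : seq nat) (Z : nat -> vtx) (i : nat) : step :=
  ((if i == 1%N then VA else Z i.-1, Z i, (at1 s i)%:Z), true).

Definition chainvtx (Z : nat -> vtx) (j : nat) : vtx := if j is 0 then VA else Z j.

Lemma chain_walk E s Z : (forall i, (0 < i <= size s)%N -> (chainstep s Z i).1 \in E) ->
  forall len a, (a + len <= size s)%N ->
  walk E (chainvtx Z a) (map (chainstep s Z) (iota a.+1 len)) (chainvtx Z (a + len)).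
Proof.
move=> in_E; elim=> [|len IH] a le_len /=; first by rewrite addn0.
rewrite in_E /=; last by lia.
apply/andP; split; first by case: a {le_len} => [|a] /=; rewrite eqxx.
by rewrite -addSnnS; apply: (IH a.+1); lia.
Qed.

Lemma plen_chain n s Z j : plen n (map (chainstep s Z) (iota 1 j)) = wsum n s j.
Proof.
rewrite /plen big_map /wsum.
have -> : iota 1 j = index_iota 1 j.+1 by rewrite /index_iota subSS subn0.
by rewrite big_add1.
Qed.

Lemma last_chain (Z : nat -> vtx) j : last VA (map Z (iota 1 j)) = chainvtx Z j.
Proof.
case: j => [|j] //; have := iotaD 1 j 1; rewrite addn1 add1n => ->.
by rewrite map_cat last_cat.
Qed.

Section InterlacedChain.

Variables (n : nat) (xs ys : seq nat).
Local Notation x j := (nth 0%N xs j).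
Local Notation y j := (nth 0%N ys j).

Hypothesis interl : interlaced xs ys.
Hypothesis xs_range : forall t, t \in xs -> (0 < t < n)%N.
Hypothesis ys_range : forall t, t \in ys -> (0 < t < n)%N.

Lemma sizes : (size ys <= size xs <= (size ys).+1)%N.
Proof. by case/andP: interl. Qed.

Lemma alt_lt a b : (a < b)%N -> (b < size xs + size ys)%N ->
  (nth 0%N (alt xs ys) a < nth 0%N (alt xs ys) b)%N.
Proof.
have [size_alt _ _] := alt_nth sizes; case/andP: interl => sorted_alt _ lt_ab lt_b.
by apply: (sorted_ltn_nth ltn_trans 0%N sorted_alt); rewrite ?inE ?size_alt //; lia.
Qed.

Lemma x_range j : (j < size xs)%N -> (0 < x j < n)%N.
Proof. by move=> lt_j; apply/xs_range/mem_nth. Qed.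

Lemma xy_lt j : (j < size ys)%N -> (x j < y j < n)%N.
Proof.
move=> lt_j; have [_ alt_x alt_y] := alt_nth sizes.
have lt_jx : (j < size xs)%N by case/andP: sizes; lia.
have /andP [_ ->] := ys_range (mem_nth 0%N lt_j); rewrite andbT.
by rewrite -alt_x // -alt_y //; apply: alt_lt; lia.
Qed.

Lemma yx_lt j : (j.+1 < size xs)%N -> (y j < x j.+1)%N.
Proof.
move=> lt_j; have [_ alt_x alt_y] := alt_nth sizes.
have lt_jy : (j < size ys)%N by case/andP: sizes; lia.
by rewrite -alt_y // -alt_x // -[(j.+1).*2]/(j.*2.+2); apply: alt_lt; lia.
Qed.

Lemma x_lt j : (j < size xs)%N -> (x j < n)%N.
Proof. by move/x_range/andP=> []. Qed.

Lemma y_lt j : (j < size ys)%N -> (y j < n)%N.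
Proof. by move/xy_lt/andP=> []. Qed.

(* F_j = (y_0 - x_0) + ... + (y_(j-1) - x_(j-1)); these are the values of f *)
Definition fsum (j : nat) : nat := (\sum_(0 <= i < j) (y i - x i))%N.

Definition prev_y (j : nat) : nat := if j is j'.+1 then y j' else 0%N.

Lemma fsumS j : fsum j.+1 = (fsum j + (y j - x j))%N.
Proof. by rewrite /fsum big_nat_recr. Qed.

Lemma prev_y_le_x j : (j < size xs)%N -> (prev_y j <= x j)%N.
Proof. by case: j => [|j] //= lt_j; apply/ltnW/yx_lt. Qed.

Lemma chain_sums j : (j <= size ys)%N ->
  [/\ (fsum j <= prev_y j)%N, (0 < j)%N -> (0 < fsum j)%N &
   forall m, [/\ (minsum xs j m <= minsum ys j m)%N,
                 (minsum ys j m <= minsum xs j m + fsum j)%N,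
                 (minsum ys j m <= minsum xs j m + m)%N &
                 (fsum j + minsum xs j m <= minsum ys j m + (prev_y j - m))%N]].
Proof.
elim: j => [|j IH] le_j.
  by split=> [||m]; rewrite /minsum /fsum ?big_geq.
have [F_le _ sums] := IH (ltnW le_j).
have xy_j := xy_lt le_j; have py_le := prev_y_le_x (leq_trans le_j (proj1 (andP sizes))).
rewrite fsumS /=; split=> [||m]; try lia.
by have [s1 s2 s3 s4] := sums m; rewrite !minsumS; split; lia.
Qed.

Lemma psum_wsum_x j m : (j <= size xs)%N -> psum m (wsum n xs j) = (minsum xs j m)%:Z.
Proof. by move=> le_j; apply: psum_wsum => i lt_ij; apply: x_lt; lia. Qed.

Lemma psum_wsum_y j m : (j <= size ys)%N -> psum m (wsum n ys j) = (minsum ys j m)%:Z.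
Proof. by move=> le_j; apply: psum_wsum => i lt_ij; apply: y_lt; lia. Qed.

(* The edge X_(j+1) -> Y_(j+1), of label F_(j+1). *)
Lemma cross_edge_xy j : (j < size ys)%N ->
  incone (wsum n xs j.+1 + omega n (fsum j.+1)%:Z - wsum n ys j.+1) /\
  incone (wsum n ys j.+1 + omega n (n%:Z - (fsum j.+1)%:Z) - wsum n xs j.+1).
Proof.
move=> lt_j; have [F_le F_gt0 sums] := chain_sums lt_j.
have := y_lt lt_j; have le_jx : (j.+1 <= size xs)%N by case/andP: sizes; lia.
move: F_le F_gt0 => /= F_le /(_ isT) F_gt0 y_j.
apply: edge_potential => [||m|m]; rewrite ?psum_wsum_x ?psum_wsum_y //; try lia.
- by case: (sums n) => /=; lia.
- by case: (sums m) => /=; lia.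
- by case: (sums m) => /=; lia.
Qed.

(* The edge Y_(j+1) -> X_(j+2), of label x_(j+1) - F_(j+1). *)
Lemma cross_edge_yx j : (j.+1 < size xs)%N ->
  incone (wsum n ys j.+1 + omega n (x j.+1 - fsum j.+1)%:Z - wsum n xs j.+2) /\
  incone (wsum n xs j.+2 + omega n (n%:Z - (x j.+1 - fsum j.+1)%:Z) - wsum n ys j.+1).
Proof.
move=> lt_j; have lt_jy : (j < size ys)%N by case/andP: sizes; lia.
have [F_le _ sums] := chain_sums lt_jy.
have := x_lt lt_j; have := yx_lt lt_j; move: F_le => /= F_le yx_j x_j.
apply: edge_potential => [||m|m]; rewrite ?psum_wsum_x ?psum_wsum_y ?(minsumS xs j.+1) //; try lia.
- by case: (sums n) => /=; lia.
- by case: (sums m) => /=; lia.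
- by case: (sums m) => /=; lia.
Qed.

Local Notation fval k := (nth 0 (fchain 0 (alt xs ys)) k).

Lemma fval_y j : (j < size ys)%N -> fval j.*2 = (x j)%:Z - (fsum j)%:Z ->
  fval j.*2.+1 = (fsum j.+1)%:Z.
Proof.
move=> lt_j fx; have [size_alt _ alt_y] := alt_nth sizes.
have /andP [xy_j _] := xy_lt lt_j.
rewrite fchain_nthS ?size_alt; last by case/andP: sizes; lia.
by rewrite fx alt_y // fsumS PoszD; lia.
Qed.

Lemma fval_x j : (j < size xs)%N -> fval j.*2 = (x j)%:Z - (fsum j)%:Z.
Proof.
have [size_alt alt_x _] := alt_nth sizes.
elim: j => [|j IH] lt_j.
  rewrite fchain_nth0 ?size_alt ?addn_gt0 ?lt_j // subr0 (alt_x 0%N lt_j).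
  by rewrite /fsum big_geq // subr0.
have lt_jy : (j < size ys)%N by case/andP: sizes; lia.
rewrite -[(j.+1).*2]/(j.*2.+2) fchain_nthS ?size_alt; last by lia.
by rewrite (fval_y lt_jy (IH (ltnW lt_j))) -[j.*2.+2]/((j.+1).*2) alt_x.
Qed.

Lemma uniq_alt : uniq (alt xs ys).
Proof. by case/andP: interl => sorted_alt _; exact: (sorted_uniq ltn_trans ltnn). Qed.

Lemma fD_x j : (j < size xs)%N -> fD xs ys (x j) = (x j)%:Z - (fsum j)%:Z.
Proof.
move=> lt_j; have [size_alt alt_x _] := alt_nth sizes.
have lt_pos : (j.*2 < size (alt xs ys))%N by rewrite size_alt; case/andP: sizes; lia.
by rewrite /fD -{1}(alt_x j lt_j) (index_uniq 0%N lt_pos uniq_alt) fval_x.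
Qed.

Lemma fD_y j : (j < size ys)%N -> fD xs ys (y j) = (fsum j.+1)%:Z.
Proof.
move=> lt_j; have [size_alt _ alt_y] := alt_nth sizes.
have lt_pos : (j.*2.+1 < size (alt xs ys))%N by rewrite size_alt; case/andP: sizes; lia.
have lt_jx : (j < size xs)%N by case/andP: sizes; lia.
by rewrite /fD -(alt_y j lt_j) (index_uniq 0%N lt_pos uniq_alt) (fval_y lt_j (fval_x lt_jx)).
Qed.

Lemma fsum_lt_x j : (j < size xs)%N -> (fsum j < x j)%N.
Proof.
move=> lt_j; have le_jy : (j <= size ys)%N by case/andP: sizes; lia.
have [F_le _ _] := chain_sums le_jy; have /andP [x_j _] := x_range lt_j.
case: j lt_j {le_jy} F_le x_j => [|j] lt_j /= F_le; first by rewrite /fsum big_geq.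
by have := yx_lt lt_j; lia.
Qed.

Lemma fsum_y j : (j < size ys)%N -> (0 < fsum j.+1 < y j)%N.
Proof.
move=> lt_j; have lt_jx : (j < size xs)%N by case/andP: sizes; lia.
by have := fsum_lt_x lt_jx; have := xy_lt lt_j; rewrite fsumS; lia.
Qed.

Variables (X Y : nat -> vtx) (d : vtx -> wt n).
Hypothesis dA : d VA = 0.
Hypothesis dX : forall i, d (X i) = wsum n xs i.
Hypothesis dY : forall i, d (Y i) = wsum n ys i.

Local Notation D := (Dgraph xs ys X Y).

Lemma d_chain_source Z s : (forall i, d (Z i) = wsum n s i) ->
  forall j, d (if j.+1 == 1%N then VA else Z j) = wsum n s j.
Proof. by move=> dZ [|j] /=; rewrite ?dA ?dZ // /wsum big_geq. Qed.

Lemma D_edge e : e \in D -> (1 <= e.2 <= n%:Z - 1) /\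
  incone (d e.1.1 + omega n e.2 - d e.1.2) /\
  incone (d e.1.2 + omega n (n%:Z - e.2) - d e.1.1).
Proof.
rewrite !mem_cat => /or4P [] /mapP [[|j] /[!mem_iota] j_in ->] //=;
  rewrite /at1 /= ?(d_chain_source dX) ?(d_chain_source dY) ?dX ?dY.
- have lt_j : (j < size xs)%N by lia.
  have := x_range lt_j; split; first by lia.
  by apply: chain_edge => [|i le_ij]; [lia | apply: x_lt; lia].
- have lt_j : (j < size ys)%N by lia.
  have := xy_lt lt_j; split; first by lia.
  by apply: chain_edge => [|i le_ij]; [lia | apply: y_lt; lia].
- have lt_j : (j < size ys)%N by lia.
  rewrite fD_y //; have := fsum_y lt_j; have := y_lt lt_j; split; first by lia.
  exact: cross_edge_xy.
- have lt_j : (j.+1 < size xs)%N by lia.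
  rewrite fD_x // subzn; last exact/ltnW/fsum_lt_x.
  have := fsum_lt_x lt_j; have := x_lt lt_j; split; first by lia.
  exact: cross_edge_yx.
Qed.

Lemma D_potential : potential D d.
Proof. by move=> e /D_edge []. Qed.

Lemma chain_prefix s Z : (forall i, d (Z i) = wsum n s i) ->
  (forall i, (0 < i <= size s)%N -> (chainstep s Z i).1 \in D) ->
  forall j, (j <= size s)%N ->
  walk D VA (map (chainstep s Z) (iota 1 j)) (chainvtx Z j) /\
  plen n (map (chainstep s Z) (iota 1 j)) = d (chainvtx Z j).
Proof.
move=> dZ in_D j le_j; split; first by have := @chain_walk D s Z in_D j 0%N; rewrite add0n; apply.
by rewrite plen_chain; case: j {le_j} => [|j] /=; rewrite ?dA ?dZ // /wsum big_geq.
Qed.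

Lemma chain_conclusions : (0 < n)%N -> conclusions n xs ys X Y.
Proof.
move=> n_gt0.
have in_DX i : (0 < i <= size xs)%N -> (chainstep xs X i).1 \in D.
  by move=> i_in; rewrite mem_cat; apply/orP; left; apply/mapP; exists i; rewrite ?mem_iota //; lia.
have in_DY i : (0 < i <= size ys)%N -> (chainstep ys Y i).1 \in D.
  move=> i_in; rewrite !mem_cat; apply/orP; right; apply/orP; left.
  by apply/mapP; exists i; rewrite ?mem_iota //; lia.
have prefX := chain_prefix dX in_DX; have prefY := chain_prefix dY in_DY.
have [walkX lenX] := prefX _ (leqnn _); have [walkY lenY] := prefY _ (leqnn _).
split.
  by move=> [|j] // /andP [_ lt_j]; rewrite /at1 /= fD_x //; have := fsum_lt_x lt_j; lia.
split.
  by move=> [|j] // /andP [_ lt_j]; rewrite /at1 /= fD_y //; have := fsum_y lt_j; lia.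
split; first by move=> e /D_edge [].
split; first by rewrite /chainend last_chain; exact: tight_geodesic D_potential dA walkX lenX.
split; first by rewrite plen_chain (big_nth 0%N); exact: wcong_refl.
split; first by rewrite /chainend last_chain; exact: tight_geodesic D_potential dA walkY lenY.
split; first by rewrite plen_chain (big_nth 0%N); exact: wcong_refl.
move=> v; rewrite inE mem_cat => /or3P [/eqP -> | /mapP [i i_in ->] | /mapP [i i_in ->]].
- by apply: (@tight_coherent _ _ _ _ [::] n_gt0 D_potential dA); rewrite /plen ?big_nil.
- rewrite mem_iota in i_in; have [walk_i len_i] := prefX i ltac:(lia).
  by case: i i_in walk_i len_i => [|i] // _; exact: tight_coherent D_potential dA.
- rewrite mem_iota in i_in; have [walk_i len_i] := prefY i ltac:(lia).
  by case: i i_in walk_i len_i => [|i] // _; exact: tight_coherent D_potential dA.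
Qed.

End InterlacedChain.

Lemma rs_range n c t : t \in rs n c -> (0 < t < n)%N.
Proof. by rewrite mem_filter mem_iota => /andP [_]; lia. Qed.

Lemma ls_range n c t : t \in ls n c -> (0 < t < n)%N.
Proof. by rewrite mem_filter mem_iota => /andP [_]; lia. Qed.

Theorem mainTheorem2 (n k : nat) (c : seq bool) :
  (0 < k < n)%N -> size c = n -> count id c = k ->
  (interlaced (rs n c) (ls n c) -> conclusions n (rs n c) (ls n c) VR VL) /\
  (interlaced (ls n c) (rs n c) -> conclusions n (ls n c) (rs n c) VL VR).
Proof.
move=> k_range _ _; have n_gt0 : (0 < n)%N by lia.
pose d v : wt n :=
  match v with VA => 0 | VR i => wsum n (rs n c) i | VL i => wsum n (ls n c) i end.
split=> interl.
  exact: (@chain_conclusions n _ _ interl (@rs_range n c) (@ls_range n c) VR VL d).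
exact: (@chain_conclusions n _ _ interl (@ls_range n c) (@rs_range n c) VL VR d).
Qed.
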